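(* Let $q\in\mathbb{C}\setminus\{0\}$ be not a root of unity, and let $\pi$ be a $U_q(\mathfrak{sl}_2)$-module algebra structure on $\mathbb{C}_q[x^{\pm1},y^{\pm1}]$ such that $\pi(\mathsf{k})(x)=\alpha x$, $\pi(\mathsf{k})(y)=\beta y$ with $\alpha,\beta\in\mathbb{C}\setminus\{0\}$, and write (finite sums) $$\pi(\mathsf{e})(x)=\sum_{i,j}a_{i,j}x^iy^j,\quad \pi(\mathsf{e})(y)=\sum_{i,j}b_{i,j}x^iy^j,\quad \pi(\mathsf{f})(x)=\sum_{i,j}c_{i,j}x^iy^j,\quad \pi(\mathsf{f})(y)=\sum_{i,j}d_{i,j}x^iy^j,$$ with $a_{i,j},b_{i,j},c_{i,j},d_{i,j}\in\mathbb{C}$. Then for all $i,j\in\mathbb{Z}$, $$a_{i+1,j}(q^i-\beta)=b_{i,j+1}(1-\alpha q^j),\qquad c_{i+1,j}(1-\beta^{-1}q^i)=d_{i,j+1}(q^j-\alpha^{-1}).$$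
   Context: $\mathbb{C}_q[x^{\pm1},y^{\pm1}]$ is the unital algebra generated by $x,y,x^{-1},y^{-1}$ with relations $yx=qxy$, $xx^{-1}=x^{-1}x=yy^{-1}=y^{-1}y=\mathbf{1}$; the monomials $x^iy^j$, $i,j\in\mathbb{Z}$, form a basis. $U_q(\mathfrak{sl}_2)$ is the unital algebra generated by $\mathsf{k},\mathsf{k}^{-1},\mathsf{e},\mathsf{f}$ with relations $\mathsf{k}\mathsf{k}^{-1}=\mathsf{k}^{-1}\mathsf{k}=\mathbf{1}$, $\mathsf{k}\mathsf{e}=q^2\mathsf{e}\mathsf{k}$, $\mathsf{k}\mathsf{f}=q^{-2}\mathsf{f}\mathsf{k}$, $\mathsf{e}\mathsf{f}-\mathsf{f}\mathsf{e}=\frac{\mathsf{k}-\mathsf{k}^{-1}}{q-q^{-1}}$, with Hopf structure $\Delta(\mathsf{k})=\mathsf{k}\otimes\mathsf{k}$, $\Delta(\mathsf{e})=\mathbf{1}\otimes\mathsf{e}+\mathsf{e}\otimes\mathsf{k}$, $\Delta(\mathsf{f})=\mathsf{f}\otimes\mathbf{1}+\mathsf{k}^{-1}\otimes\mathsf{f}$, $\varepsilon(\mathsf{k})=1$, $\varepsilon(\mathsf{e})=\varepsilon(\mathsf{f})=0$. A $U_q(\mathfrak{sl}_2)$-module algebra structure on a unital algebra $A$ is an algebra homomorphism $\pi:U_q(\mathfrak{sl}_2)\to\operatorname{End}_\mathbb{C}A$ with $\pi(h)(ab)=\sum_i\pi(h_i')(a)\pi(h_i'')(b)$ (where $\Delta(h)=\sum_i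 h_i'\otimes h_i''$) and $\pi(h)(\mathbf{1})=\varepsilon(h)\mathbf{1}$. *)

From mathcomp Require Import all_boot all_order all_algebra.
From mathcomp Require Import complex.
From mathcomp Require Import Rstruct.
Set Implicit Arguments. Unset Strict Implicit. Unset Printing Implicit Defensive.
Import Order.TTheory GRing.Theory Num.Theory.
Local Open Scope ring_scope.

Definition C : fieldType := complex Rdefinitions.R.

Section QTorus.
Variable A : algType C.

(* u^i for i : int, where uinv is the (two-sided) inverse of u. *)
Definition zpow (u uinv : A) (i : int) : A :=
  match i with Posz n => u ^+ n | Negz n => uinv ^+ n.+1 end.

Definition mono (x xi y yi : A) (i j : int) : A := zpow x xi i * zpow y yi j.

(* A (with distinguished x, x^-1, y, y^-1) is the quantum torus C_q[x^{±1},y^{±1}]: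
   the defining relations hold and the monomials x^i y^j form a C-basis. *)
Definition is_quantum_torus (q : C) (x xi y yi : A) : Prop :=
  [/\ y * x = q *: (x * y), x * xi = 1 /\ xi * x = 1, y * yi = 1 /\ yi * y = 1,
      (forall (s : seq (int * int)) (c : int * int -> C), uniq s ->
         \sum_(p <- s) c p *: mono x xi y yi p.1 p.2 = 0 ->
         forall p, p \in s -> c p = 0)
    &
      (forall v : A, exists (s : seq (int * int)) (c : int * int -> C),
         v = \sum_(p <- s) c p *: mono x xi y yi p.1 p.2)].

(* An algebra homomorphism U_q(sl_2) -> End_C A is the same as four linear maps
   K = pi(k), Ki = pi(k^-1), E = pi(e), F = pi(f) satisfying the defining
   relations of U_q(sl_2); the module-algebra conditions are imposed on the
   generators (equivalent to imposing them for all h, since Delta and epsilon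
   are algebra maps). *)
Definition is_Uq_module_algebra (q : C) (K Ki E F : A -> A) : Prop :=
  [/\
      [/\ (forall v, K (Ki v) = v), (forall v, Ki (K v) = v),
      (forall v, K (E v) = q ^+ 2 *: E (K v)),
      (forall v, K (F v) = q ^- 2 *: F (K v))
      & (forall v, E (F v) - F (E v) = (q - q^-1)^-1 *: (K v - Ki v))],
      (forall u v, K (u * v) = K u * K v) /\ (forall u v, Ki (u * v) = Ki u * Ki v),
      (forall u v, E (u * v) = u * E v + E u * K v) /\
      (forall u v, F (u * v) = F u * v + Ki u * F v)
    &
      [/\ K 1 = 1, Ki 1 = 1, E 1 = 0 & F 1 = 0]].

Definition expansion (x xi y yi : A) (S : seq (int * int)) (a : int -> int -> C)
    (v : A) : Prop :=
  [/\ uniq S, (forall i j, (i, j) \notin S -> a i j = 0)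
    & v = \sum_(p <- S) a p.1 p.2 *: mono x xi y yi p.1 p.2].

End QTorus.

(* Apply E to the relation y x = q x y.  Since E (u v) = u E(v) + E(u) K(v)
   and x, y are eigenvectors of K, this gives
     y E(x) + alpha E(y) x = q x E(y) + q beta E(x) y.
   Multiplying a monomial x^i y^j by x or y on either side only shifts its
   exponents, at the cost of a power of q from the commutation rule, so
   comparing the coefficients of x^(i+1) y^(j+1) on both sides (the monomials
   are a basis) gives the first identity.  The second one follows in the same
   way from F (u v) = F(u) v + K^-1(u) F(v). *)

From mathcomp Require Import all_boot all_order all_algebra.
From mathcomp Require Import complex.
From mathcomp Require Import Rstruct.
From mathcomp Require Import ring.
Set Implicit Arguments.
Unset Strict Implicit.
Unset Printing Implicit Defensive.
Import Order.TTheory GRing.Theory Num.Theory.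
Local Open Scope ring_scope.

Lemma big_uniq_support (I : eqType) (M : nmodType) (S T : seq I) (F : I -> M) :
  uniq S -> uniq T -> {subset S <= T} -> (forall p, p \notin S -> F p = 0) ->
  \sum_(p <- S) F p = \sum_(p <- T) F p.
Proof.
move=> uS uT sST F0.
rewrite [RHS](bigID (mem S)) /= [X in _ + X]big1 ?addr0; last by move=> p /F0.
rewrite -[RHS]big_filter; apply/perm_big/uniq_perm => //; first exact: filter_uniq.
by move=> p; rewrite mem_filter; case pS: (p \in S); rewrite //= sST.
Qed.

Lemma eq_of_sub_eq (V : zmodType) (u v u' v' : V) : u - v = u' - v' -> u' = v' -> u = v.
Proof. by move=> e e'; apply/subr0_eq; rewrite e e' subrr. Qed.

Section QuasiCommutation.
Variable A : algType C.

Definition qcomm (r : C) (u w : A) := u * w = r *: (w * u).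

Lemma qcomm_sym r u w : r != 0 -> qcomm r u w -> qcomm r^-1 w u.
Proof. by move=> r0 uw; rewrite /qcomm uw scalerA mulVf ?scale1r. Qed.

Lemma qcommM r s u w w' : qcomm r u w -> qcomm s u w' -> qcomm (r * s) u (w * w').
Proof.
move=> uw uw'; rewrite /qcomm mulrA uw -scalerAl -(mulrA w u) uw' -scalerAr scalerA.
by rewrite mulrA.
Qed.

Lemma qcommX r u w n : qcomm r u w -> qcomm (r ^+ n) u (w ^+ n).
Proof.
move=> uw; elim: n => [|n IH]; first by rewrite /qcomm !expr0 mulr1 mul1r scale1r.
by rewrite !exprS; apply: qcommM.
Qed.

Lemma qcommV r u w wi : w * wi = 1 -> wi * w = 1 -> r != 0 ->
  qcomm r u w -> qcomm r^-1 u wi.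
Proof.
move=> wK Kw r0 uw; apply: qcomm_sym => //.
rewrite /qcomm -[wi * u]mulr1 -wK mulrA -(mulrA wi u) uw.
by rewrite -scalerAr -scalerAl mulrA Kw mul1r.
Qed.

Lemma qcomm_zpow r u w wi i : w * wi = 1 -> wi * w = 1 -> r != 0 ->
  qcomm r u w -> qcomm (r ^ i) u (zpow w wi i).
Proof.
move=> wK Kw r0 uw; case: i => n /=; first exact: qcommX.
have -> : r ^ Negz n = r^-1 ^+ n.+1 by rewrite exprVn.
exact/qcommX/(qcommV wK Kw r0).
Qed.

Lemma qcomm_zpowl r (u ui w : A) i : u * ui = 1 -> ui * u = 1 ->
  r != 0 -> qcomm r u w -> qcomm (r ^ i) (zpow u ui i) w.
Proof.
move=> uK Ku r0 uw.
have /qcomm_sym : qcomm (r^-1 ^ i) w (zpow u ui i).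
  by apply: qcomm_zpow; rewrite ?invr_eq0 //; apply: qcomm_sym.
by rewrite expfV invrK; apply; rewrite expfz_neq0 ?invr_eq0.
Qed.

Lemma zpowSr (u ui : A) i : ui * u = 1 -> zpow u ui (i + 1) = zpow u ui i * u.
Proof.
move=> Ku; case: i => [n|[|n]].
- by rewrite -PoszD addn1 /= exprSr.
- by rewrite /= expr1 expr0.
have -> : Negz n.+1 + 1 = Negz n by rewrite !NegzE -[n.+2]addn1 PoszD opprD addrNK.
by rewrite /= [ui ^+ n.+2]exprSr -mulrA Ku mulr1.
Qed.

Lemma zpowSl (u ui : A) i : u * ui = 1 -> ui * u = 1 ->
  zpow u ui (i + 1) = u * zpow u ui i.
Proof.
move=> uK Ku; have /(qcomm_zpow i uK Ku (oner_neq0 C)) : qcomm 1 u u.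
  by rewrite /qcomm scale1r.
by rewrite /qcomm exp1rz scale1r => ->; exact: zpowSr.
Qed.

End QuasiCommutation.

Section QuantumTorus.
Variables (A : algType C) (q : C) (x xi y yi : A).
Hypotheses (q0 : q != 0) (torus : is_quantum_torus q x xi y yi).

Local Notation mono := (mono x xi y yi).
Local Notation expansion := (expansion x xi y yi).

Lemma x_mono i j : x * mono i j = mono (i + 1) j.
Proof. by case: torus => _ [xK Kx] _ _ _; rewrite /mono mulrA -zpowSl. Qed.

Lemma mono_y i j : mono i j * y = mono i (j + 1).
Proof. by case: torus => _ _ [_ Ky] _ _; rewrite /mono -mulrA -zpowSr. Qed.

Lemma y_mono i j : y * mono i j = q ^ i *: mono i (j + 1).
Proof.
case: torus => yx [xK Kx] [yK Ky] _ _.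
by rewrite /mono mulrA (qcomm_zpow i xK Kx q0 yx) -scalerAl -mulrA -zpowSl.
Qed.

Lemma mono_x i j : mono i j * x = q ^ j *: mono (i + 1) j.
Proof.
case: torus => yx [_ Kx] [yK Ky] _ _.
by rewrite /mono -mulrA (qcomm_zpowl j yK Ky q0 yx) -scalerAr mulrA -zpowSr.
Qed.

Lemma expansion_sub S T f v : expansion S f v -> uniq T -> {subset S <= T} ->
  expansion T f v.
Proof.
case=> uS f0 -> uT sST; split=> // [i j ijT|].
  by apply: f0; apply: contra ijT; apply: sST.
by apply: big_uniq_support => // -[i j] /f0 ->; rewrite scale0r.
Qed.

Lemma expansion_undup_cat S T f g u v : expansion S f u -> expansion T g v ->
  expansion (undup (S ++ T)) f u /\ expansion (undup (S ++ T)) g v.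
Proof.
by move=> eu ev; split; [apply: expansion_sub eu _ _ | apply: expansion_sub ev _ _];
  rewrite ?undup_uniq // => p pST; rewrite mem_undup mem_cat pST ?orbT.
Qed.

Lemma expansionZ S f v k :
  expansion S f v -> expansion S (fun i j => k * f i j) (k *: v).
Proof.
case=> uS f0 ->; split=> // [i j /f0 ->|]; first by rewrite mulr0.
by rewrite scaler_sumr; apply: eq_bigr => p _; rewrite scalerA.
Qed.

Lemma expansionD S T f g u v : expansion S f u -> expansion T g v ->
  expansion (undup (S ++ T)) (fun i j => f i j + g i j) (u + v).
Proof.
move=> eu ev; have [[uU f0 ->] [_ g0 ->]] := expansion_undup_cat eu ev.
split=> // [i j ijU|]; first by rewrite f0 ?g0 ?addr0.
by rewrite -big_split; apply: eq_bigr => p _; rewrite scalerDl.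
Qed.

Lemma expansion_unique S T f g v :
  expansion S f v -> expansion T g v -> forall i j, f i j = g i j.
Proof.
case: torus => _ _ _ mono_free _.
move=> ev ev' i j; have [[uU f0 Ev] [_ g0 Ev']] := expansion_undup_cat ev ev'.
have [ijU|/[dup]/f0 -> /g0 -> //] := boolP ((i, j) \in undup (S ++ T)).
have fg0 : \sum_(p <- undup (S ++ T)) (f p.1 p.2 - g p.1 p.2) *: mono p.1 p.2 = 0.
  by rewrite (eq_bigr _ (fun p _ => scalerBl _ _ _)) sumrB -Ev -Ev' subrr.
exact/subr0_eq/(mono_free _ _ uU fg0 (i, j) ijU).
Qed.

Lemma expansion_shift (h : A -> A) (s : int -> int -> C) di dj S f v :
  {morph h : u w / u + w} -> (forall k u, h (k *: u) = k *: h u) ->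
  (forall i j, h (mono i j) = s i j *: mono (i + di) (j + dj)) ->
  expansion S f v ->
  expansion [seq (p.1 + di, p.2 + dj) | p <- S]
    (fun i j => s (i - di) (j - dj) * f (i - di) (j - dj)) (h v).
Proof.
move=> hD hZ h_mono [uS f0 ->].
have h0 : h 0 = 0 by rewrite -(scale0r 0) hZ !scale0r.
have shift_inj : injective (fun p : int * int => (p.1 + di, p.2 + dj)).
  by move=> [i j] [i' j'] [/addIr -> /addIr ->].
split=> [|i j ijS|]; first by rewrite map_inj_uniq.
  rewrite f0 ?mulr0 //; apply: contra ijS => ijS.
  by have := map_f (fun p : int * int => (p.1 + di, p.2 + dj)) ijS; rewrite /= !subrK.
rewrite big_map (big_morph h hD h0); apply: eq_bigr => -[i j] _ /=.
by rewrite hZ h_mono scalerA !addrK mulrC.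
Qed.

Lemma expansion_mull w (s : int -> int -> C) di dj S f v :
  (forall i j, w * mono i j = s i j *: mono (i + di) (j + dj)) ->
  expansion S f v ->
  expansion [seq (p.1 + di, p.2 + dj) | p <- S]
    (fun i j => s (i - di) (j - dj) * f (i - di) (j - dj)) (w * v).
Proof.
by apply: (expansion_shift (h := fun u => w * u)) => [u u'|k u]; rewrite ?mulrDr ?scalerAr.
Qed.

Lemma expansion_mulr w (s : int -> int -> C) di dj S f v :
  (forall i j, mono i j * w = s i j *: mono (i + di) (j + dj)) ->
  expansion S f v ->
  expansion [seq (p.1 + di, p.2 + dj) | p <- S]
    (fun i j => s (i - di) (j - dj) * f (i - di) (j - dj)) (v * w).
Proof.
by apply: (expansion_shift (h := fun u => u * w)) => [u u'|k u]; rewrite ?mulrDl ?scalerAl.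
Qed.

Lemma coef_relation Su Sv fu fv u v k1 k2 k3 k4 i j :
  expansion Su fu u -> expansion Sv fv v ->
  k1 *: (y * u) + k2 *: (v * x) = k3 *: (x * v) + k4 *: (u * y) ->
  k1 * (q ^ (i + 1) * fu (i + 1) j) + k2 * (q ^ (j + 1) * fv i (j + 1))
    = k3 * (1 * fv i (j + 1)) + k4 * (1 * fu (i + 1) j).
Proof.
move=> eu ev rel.
have y_mono' i' j' : y * mono i' j' = q ^ i' *: mono (i' + 0) (j' + 1).
  by rewrite addr0 y_mono.
have mono_x' i' j' : mono i' j' * x = q ^ j' *: mono (i' + 1) (j' + 0).
  by rewrite addr0 mono_x.
have x_mono' i' j' : x * mono i' j' = 1 *: mono (i' + 1) (j' + 0).
  by rewrite addr0 x_mono scale1r.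
have mono_y' i' j' : mono i' j' * y = 1 *: mono (i' + 0) (j' + 1).
  by rewrite addr0 mono_y scale1r.
have e_lhs := expansionD (expansionZ k1 (expansion_mull y_mono' eu))
                          (expansionZ k2 (expansion_mulr mono_x' ev)).
have e_rhs := expansionD (expansionZ k3 (expansion_mull x_mono' ev))
                          (expansionZ k4 (expansion_mulr mono_y' eu)).
rewrite rel in e_lhs.
by have := expansion_unique e_lhs e_rhs (i + 1) (j + 1); rewrite /= !subr0 !addrK.
Qed.

End QuantumTorus.

Lemma eigen_inv (R : fieldType) (V : lmodType R) (K Ki : {linear V -> V}) v r :
  (forall w, Ki (K w) = w) -> r != 0 -> K v = r *: v -> Ki v = r^-1 *: v.
Proof.
by move=> KiK r0 Kv; rewrite -{2}(KiK v) Kv linearZ scalerA mulVf ?scale1r.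
Qed.

Section SkewDerivations.
Variables (A : algType C) (q : C) (x y : A) (D K : {linear A -> A}).
Hypothesis yx : qcomm q y x.

Lemma rskew_derivation_qcomm a b :
  (forall u v, D (u * v) = u * D v + D u * K v) -> K x = a *: x -> K y = b *: y ->
  1 *: (y * D x) + a *: (D y * x) = q *: (x * D y) + (q * b) *: (D x * y).
Proof.
move=> D_mul Kx Ky; have := congr1 D yx.
by rewrite linearZZ !D_mul Kx Ky -!scalerAr scalerDr scalerA scale1r.
Qed.

Lemma lskew_derivation_qcomm a b :
  (forall u v, D (u * v) = D u * v + K u * D v) -> K x = a *: x -> K y = b *: y ->
  b *: (y * D x) + 1 *: (D y * x) = (q * a) *: (x * D y) + q *: (D x * y).
Proof.
move=> D_mul Kx Ky; have := congr1 D yx.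
by rewrite linearZZ !D_mul Kx Ky -!scalerAl scalerDr scalerA scale1r addrC [RHS]addrC.
Qed.

End SkewDerivations.

Theorem lemma5 (q : C) (A : algType C) (x xi y yi : A)
  (K Ki E F : {linear A -> A}) (alpha beta : C)
  (a b c d : int -> int -> C) (Sa Sb Sc Sd : seq (int * int)) :
  q != 0 -> (forall n : nat, (0 < n)%N -> q ^+ n != 1) ->
  is_quantum_torus q x xi y yi ->
  is_Uq_module_algebra q K Ki E F ->
  alpha != 0 -> beta != 0 ->
  K x = alpha *: x -> K y = beta *: y ->
  expansion x xi y yi Sa a (E x) -> expansion x xi y yi Sb b (E y) ->
  expansion x xi y yi Sc c (F x) -> expansion x xi y yi Sd d (F y) ->
  forall i j : int,
    a (i + 1) j * (q ^ i - beta) = b i (j + 1) * (1 - alpha * q ^ j) /\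
    c (i + 1) j * (1 - beta^-1 * q ^ i) = d i (j + 1) * (q ^ j - alpha^-1).
Proof.
(* The identities hold for every nonzero q, roots of unity included. *)
move=> q0 _ torus [[_ KiK _ _ _] _ [E_mul F_mul] _] alpha0 beta0 Kx Ky ea eb ec ed i j.
have [yx _ _ _ _] := torus.
have Kix := eigen_inv KiK alpha0 Kx; have Kiy := eigen_inv KiK beta0 Ky.
have := coef_relation q0 torus i j ea eb (rskew_derivation_qcomm yx E_mul Kx Ky).
have := coef_relation q0 torus i j ec ed (lskew_derivation_qcomm yx F_mul Kix Kiy).
have qU : q \is a GRing.unit by rewrite unitfE.
rewrite !exprzDr // !expr1z => HF HE.
split; apply: (mulIf q0); [apply: eq_of_sub_eq HE | apply: eq_of_sub_eq (esym HF)]; ring.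
Qed.
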